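(* Let $\Lambda$ be a set of positive integers such that for all positive integers $a,b$: $a,b\in\Lambda$ if and only if $\operatorname{lcm}(a,b)\in\Lambda$. Suppose $\sigma=(\varepsilon,\varepsilon,\gamma;(123))$ is an autoparatopism of a Latin square $L$ of order $n$, and let $R_\Lambda=\{i\in[n]:o_\gamma(i)\in\Lambda\}$. If $R_\Lambda\ne\emptyset$, then the submatrix of $L$ with rows $R_\Lambda$ and columns $R_\Lambda$ is a subsquare of $L$ whose symbol set is $R_\Lambda$.
   Context: A Latin square $L$ of order $n$ is an $n\times n$ array with rows, columns and symbols indexed by $[n]$, in which each symbol occurs exactly once in each row and each column. Its set of triples is $O(L)$. A subsquare is a submatrix that is itself a Latin square. Permutations act on the right; $\varepsilon$ is the identity. A paratopism $(\alpha,\beta,\gamma;(123))$ maps $L$ to $L^\sigma$ with triple set $\{(z\gamma,x\alpha,y\beta):(x,y,z)\in O(L)\}$. It is an autoparatopism of $L$ if $L^\sigma=L$. $o_\pi(i)$ is the length of the cycle of $\pi$ containing $i$ (fixed points are cycles of length $1$). *)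

From mathcomp Require Import all_boot all_order all_fingroup.
Set Implicit Arguments. Unset Strict Implicit. Unset Printing Implicit Defensive.

(* A Latin square of order n: rows, columns, symbols indexed by 'I_n
   (i.e. [n] = {0,..,n-1}); L x y is the symbol in row x, column y. *)
Definition latin_square (n : nat) (L : 'I_n -> 'I_n -> 'I_n) : Prop :=
  (forall x : 'I_n, forall z : 'I_n, exists! y : 'I_n, L x y = z) /\
  (forall y : 'I_n, forall z : 'I_n, exists! x : 'I_n, L x y = z).

Definition triples (n : nat) (L : 'I_n -> 'I_n -> 'I_n) : {set 'I_n * 'I_n * 'I_n} :=
  [set t : 'I_n * 'I_n * 'I_n | L t.1.1 t.1.2 == t.2].

(* Triple set of L^sigma for sigma = (alpha, beta, gamma; (123)):
   {(z gamma, x alpha, y beta) : (x,y,z) in O(L)}; permutations act on the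
   right, so "x alpha" is the application alpha x. *)
Definition paratopism123_triples (n : nat) (alpha beta gamma : {perm 'I_n})
    (L : 'I_n -> 'I_n -> 'I_n) : {set 'I_n * 'I_n * 'I_n} :=
  [set (gamma t.2, alpha t.1.1, beta t.1.2) | t in triples L].

Definition autoparatopism123 (n : nat) (alpha beta gamma : {perm 'I_n})
    (L : 'I_n -> 'I_n -> 'I_n) : Prop :=
  paratopism123_triples alpha beta gamma L = triples L.

Definition cyc_len (n : nat) (pi : {perm 'I_n}) (i : 'I_n) : nat :=
  #|porbit pi i|.

Definition subsquare_with_symbols (n : nat) (L : 'I_n -> 'I_n -> 'I_n)
    (R C S : {set 'I_n}) : Prop :=
  #|R| = #|C| /\ #|S| = #|R| /\
  (forall x y, x \in R -> y \in C -> L x y \in S) /\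
  (forall x z, x \in R -> z \in S -> exists! y, y \in C /\ L x y = z) /\
  (forall y z, y \in C -> z \in S -> exists! x, x \in R /\ L x y = z).

From mathcomp Require Import all_boot all_order all_fingroup.

(* The autoparatopism (1, 1, gamma; (123)) says exactly that L (gamma z) x = y
   whenever L x y = z, so the triples of L are stable under the rotation
   (x, y, z) |-> (gamma z, x, y).  Rotating three times shows that gamma is an
   automorphism of L, hence gamma^k is one for every k, and the cycle length of
   any entry of a triple divides the lcm of the cycle lengths of the other two.
   Since Lambda is closed under lcm and under (positive) divisors, any two
   entries of a triple in R force the third into R, which is precisely what
   makes R x R a subsquare on the symbols R. *)

Set Implicit Arguments.
Unset Strict Implicit.
Unset Printing Implicit Defensive.

Section PorbitCard.

Variables (T : finType) (s : {perm T}).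

Lemma card_porbit_gt0 x : 0 < #|porbit s x|.
Proof. by rewrite lt0n card_porbit_neq0. Qed.

Lemma card_porbit_perm x : #|porbit s (s x)| = #|porbit s x|.
Proof. by rewrite -(porbit_perm s 1 x) permX. Qed.

Lemma iter_porbit_mul k x : iter (k * #|porbit s x|) s x = x.
Proof. by elim: k => //= k IHk; rewrite mulSn iterD IHk iter_porbit. Qed.

Lemma iter_mod_porbit m x : iter (m %% #|porbit s x|) s x = iter m s x.
Proof. by rewrite {2}(divn_eq m #|porbit s x|) addnC iterD iter_porbit_mul. Qed.

Lemma card_porbit_dvdP m x : reflect (iter m s x = x) (#|porbit s x| %| m).
Proof.
apply: (iffP idP) => [/dvdnP[k ->] | fix_x]; first exact: iter_porbit_mul.
have lt_mod : m %% #|porbit s x| < #|porbit s x| by rewrite ltn_mod card_porbit_gt0.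
(* the first #|porbit s x| iterates are distinct, so x recurs only at 0 *)
have := nth_uniq x _ _ (uniq_traject_porbit s x).
rewrite size_traject => /(_ _ 0 lt_mod (card_porbit_gt0 x)).
rewrite !nth_traject ?card_porbit_gt0 //= iter_mod_porbit fix_x eqxx.
by rewrite /dvdn => /esym ->.
Qed.

End PorbitCard.

Section LcmClosed.

Variable Lambda : pred nat.
Hypothesis Lambda_gt0 : forall a, Lambda a -> 0 < a.
Hypothesis Lambda_lcm : forall a b, 0 < a -> 0 < b ->
  (Lambda a && Lambda b) = Lambda (lcmn a b).

Lemma lcm_closed_dvd a c : 0 < a -> a %| c -> Lambda c -> Lambda a.
Proof.
move=> a_gt0 dvd_ac Lc; have c_gt0 := Lambda_gt0 Lc.
have lcm_ac : lcmn a c = c by apply/eqP; rewrite eqn_dvd dvdn_lcmr dvdn_lcm dvd_ac dvdnn.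
by move: Lc; rewrite -lcm_ac -Lambda_lcm // => /andP[].
Qed.

Lemma lcm_closed_dvd_lcm a b c : 0 < c -> c %| lcmn a b ->
  Lambda a -> Lambda b -> Lambda c.
Proof.
move=> c_gt0 dvd_c La Lb; apply: lcm_closed_dvd dvd_c _ => //.
by rewrite -Lambda_lcm ?La ?Lb ?Lambda_gt0.
Qed.

End LcmClosed.

Lemma triple_closed_subsquare n (L : 'I_n -> 'I_n -> 'I_n) (S : {set 'I_n}) :
  latin_square L ->
  (forall x y, x \in S -> y \in S -> L x y \in S) ->
  (forall x y, x \in S -> L x y \in S -> y \in S) ->
  (forall x y, y \in S -> L x y \in S -> x \in S) ->
  subsquare_with_symbols L S S S.
Proof.
move=> [row_latin col_latin] closed_xy closed_xz closed_yz.
split=> //; split=> //; split=> //; split.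
- move=> x z Sx Sz; have [y [Lxy uniq_y]] := row_latin x z.
  exists y; split=> [|y' [_ /uniq_y]] //.
  by split=> //; apply: closed_xz Sx _; rewrite Lxy.
- move=> y z Sy Sz; have [x [Lxy uniq_x]] := col_latin y z.
  exists x; split=> [|x' [_ /uniq_x]] //.
  by split=> //; apply: closed_yz Sy _; rewrite Lxy.
Qed.

Section Autoparatopism123.

Variables (n : nat) (L : 'I_n -> 'I_n -> 'I_n) (gamma : {perm 'I_n}).
Hypothesis autoL : autoparatopism123 1 1 gamma L.

Let o := cyc_len gamma.

Lemma autoparatopism123_rotate x y : L (gamma (L x y)) x = y.
Proof.
have : (gamma (L x y), x, y) \in paratopism123_triples 1 1 gamma L.
  by apply/imsetP; exists (x, y, L x y); rewrite ?inE //= !perm1.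
by rewrite autoL inE => /eqP.
Qed.

Lemma autoparatopism123_rotate2 x y : L (gamma y) (gamma (L x y)) = x.
Proof. by rewrite -{1}(autoparatopism123_rotate x y) autoparatopism123_rotate. Qed.

Lemma autoparatopism123_morph x y : L (gamma x) (gamma y) = gamma (L x y).
Proof.
by rewrite -{1}(autoparatopism123_rotate2 x y) autoparatopism123_rotate.
Qed.

Lemma autoparatopism123_iter_morph k x y :
  L (iter k gamma x) (iter k gamma y) = iter k gamma (L x y).
Proof. by elim: k => //= k IHk; rewrite autoparatopism123_morph IHk. Qed.

Lemma cyc_len_dvd_lcm x y : o (L x y) %| lcmn (o x) (o y).
Proof.
apply/card_porbit_dvdP; rewrite -autoparatopism123_iter_morph.
by rewrite !(card_porbit_dvdP _ _ _ _) ?dvdn_lcml ?dvdn_lcmr.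
Qed.

Lemma cyc_len_dvd_lcm_rotate x y : o y %| lcmn (o (L x y)) (o x).
Proof.
have := cyc_len_dvd_lcm (gamma (L x y)) x.
by rewrite autoparatopism123_rotate /o /cyc_len card_porbit_perm.
Qed.

Lemma cyc_len_dvd_lcm_rotate2 x y : o x %| lcmn (o y) (o (L x y)).
Proof.
have := cyc_len_dvd_lcm (gamma y) (gamma (L x y)).
by rewrite autoparatopism123_rotate2 /o /cyc_len !card_porbit_perm.
Qed.

End Autoparatopism123.

Theorem theorem3p6 (Lambda : pred nat)
  (HLpos : forall a : nat, Lambda a -> 0 < a)
  (HLlcm : forall a b : nat, 0 < a -> 0 < b ->
             (Lambda a && Lambda b) = Lambda (lcmn a b))
  (n : nat) (L : 'I_n -> 'I_n -> 'I_n) (gamma : {perm 'I_n})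
  (HL : latin_square L)
  (Hauto : autoparatopism123 1 1 gamma L) :
  let R := [set i : 'I_n | Lambda (cyc_len gamma i)] in
  R != set0 -> subsquare_with_symbols L R R R.
Proof.
move=> R _.
have inR a b c : cyc_len gamma c %| lcmn (cyc_len gamma a) (cyc_len gamma b) ->
    a \in R -> b \in R -> c \in R.
  rewrite !inE => dvd_c; apply: lcm_closed_dvd_lcm dvd_c => //.
  exact: card_porbit_gt0.
apply: triple_closed_subsquare => // x y.
- exact/inR/cyc_len_dvd_lcm.
- by move=> Rx Rz; apply: inR Rz Rx; apply: cyc_len_dvd_lcm_rotate.
- exact/inR/cyc_len_dvd_lcm_rotate2.
Qed.
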